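(* Let $A$ be a commutative noetherian ring and $\operatorname{mod} A$ the category of finitely generated $A$-modules. The map $\mathcal D\mapsto\operatorname{Ass}\mathcal D=\bigcup_{M\in\mathcal D}\operatorname{Ass} M$ induces a bijection between the set of full subcategories of $\operatorname{mod} A$ closed under submodules and extensions, and the set of all subsets of $\operatorname{Spec} A$.
   Context: $\operatorname{Ass} M$ is the set of associated primes of $M$. *)

From HB Require Import structures.
From mathcomp Require Import all_boot all_order all_algebra.
Set Implicit Arguments. Unset Strict Implicit. Unset Printing Implicit Defensive.
Import GRing.Theory.
Local Open Scope ring_scope.

Section Defs.
Variable A : comPzRingType.

Definition is_ideal (I : A -> Prop) : Prop :=
  [/\ I 0, (forall a b, I a -> I b -> I (a + b)) & (forall r a, I a -> I (r * a))].

Definition prime_ideal (p : A -> Prop) : Prop :=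
  [/\ is_ideal p, ~ p 1 & (forall a b, p (a * b) -> p a \/ p b)].

Definition noetherian_ring : Prop :=
  forall I : nat -> (A -> Prop),
    (forall n, is_ideal (I n)) ->
    (forall n a, I n a -> I n.+1 a) ->
    exists N, forall n a, (N <= n)%N -> I n a -> I N a.

Definition fin_gen (M : lmodType A) : Prop :=
  exists s : seq M, forall x : M,
    exists c : 'I_(size s) -> A, x = \sum_(i < size s) c i *: s`_i.

Definition Ass (M : lmodType A) (p : A -> Prop) : Prop :=
  prime_ideal p /\ exists x : M, forall a, p a <-> a *: x = 0.

Definition subcat := forall M : lmodType A, Prop.

Definition AssD (D : subcat) (p : A -> Prop) : Prop :=
  exists M : lmodType A, D M /\ Ass M p.

(* Nonempty full subcategory of mod A (objects finitely generated),
   closed under submodules (hence under isomorphisms: any module admitting an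
   injective A-linear map into a member of D is in D) and under extensions. *)
Definition sub_ext_closed (D : subcat) : Prop :=
  [/\ (exists M, D M),
      (forall M, D M -> fin_gen M),
      (forall (N M : lmodType A) (f : {linear N -> M}),
          injective f -> D M -> D N) &
      (forall (L M N : lmodType A) (f : {linear L -> M}) (g : {linear M -> N}),
          injective f -> (forall z, exists y, g y = z) ->
          (forall y, g y = 0 <-> exists x, f x = y) ->
          D L -> D N -> D M)].

End Defs.

(* Injectivity: for D closed under submodules and extensions and M finitely generated,
   Ass M <= Ass D forces M in D.  Take K maximal among submodules with K in D and
   Ass (M/K) <= Ass D.  If K <> M, a maximal annihilator p = ann (x + K) is prime, so
   p = ann y for some y in a module N of D.  Enlarge K to the submodule L of those m
   with p m <= K and t m in K + A x for some t outside p (ACC lets one t0 serve for all);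
   m |-> c y, where t0 m = c x mod K, embeds L/K into N, so L is in D, and
   Ass (M/L) <= Ass (M/K) + {p},
   contradicting maximality.  Surjectivity: the modules with Ass in Phi form such a
   subcategory, and A/p realises each p in Phi. *)

From HB Require Import structures.
From mathcomp Require Import all_boot all_order all_algebra.
From mathcomp Require Import boolp.
Set Implicit Arguments. Unset Strict Implicit. Unset Printing Implicit Defensive.
Import GRing.Theory.
Local Open Scope ring_scope.
Local Open Scope quotient_scope.

Section Ideals.
Variables (A : comPzRingType) (I : A -> Prop).
Hypothesis hI : is_ideal I.

Lemma ideal0 : I 0. Proof. by case: hI. Qed.
Lemma idealD a b : I a -> I b -> I (a + b). Proof. by case: hI => _ h _; apply: h. Qed.
Lemma idealMl r a : I a -> I (r * a). Proof. by case: hI => _ _ h; apply: h. Qed.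
Lemma idealMr r a : I a -> I (a * r). Proof. by rewrite mulrC; apply: idealMl. Qed.
Lemma idealN a : I a -> I (- a). Proof. by rewrite -mulN1r; apply: idealMl. Qed.
Lemma idealB a b : I a -> I b -> I (a - b).
Proof. by move=> Ia Ib; apply: idealD => //; apply: idealN. Qed.

End Ideals.

Section Submodules.
Variables (A : comPzRingType) (M : lmodType A).

Definition is_submod (P : M -> Prop) :=
  [/\ P 0, (forall x y, P x -> P y -> P (x + y)) & (forall a x, P x -> P (a *: x))].

Lemma zero_submod : is_submod (fun x => x = 0).
Proof. by split=> [//|x y -> ->|a x ->]; rewrite ?addr0 ?scaler0. Qed.

Variables (P : M -> Prop) (hP : is_submod P).

Lemma submod0 : P 0. Proof. by case: hP. Qed.
Lemma submodD x y : P x -> P y -> P (x + y). Proof. by case: hP => _ h _; apply: h. Qed.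
Lemma submodZ a x : P x -> P (a *: x). Proof. by case: hP => _ _ h; apply: h. Qed.
Lemma submodN x : P x -> P (- x). Proof. by rewrite -scaleN1r; apply: submodZ. Qed.
Lemma submodB x y : P x -> P y -> P (x - y).
Proof. by move=> Px Py; apply: submodD => //; apply: submodN. Qed.

Lemma ann_submod_ideal m : is_ideal (fun a => P (a *: m)).
Proof.
split=> [|a b Pa Pb|r a Pa]; first by rewrite scale0r; apply: submod0.
  by rewrite scalerDl; apply: submodD.
by rewrite -scalerA; apply: submodZ.
Qed.

(* Indexing by [hP] lets the closure instance below, hence [subm hP], depend on it. *)
Definition submod_pred of is_submod P : {pred M} := fun x => `[< P x >].

Lemma submod_pred_closed : subsemimod_closed (submod_pred hP).
Proof.
split; first split.
- exact/asboolP/submod0.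
- by move=> x y /asboolP Px /asboolP Py; apply/asboolP/submodD.
- by move=> a x /asboolP Px; apply/asboolP/submodZ.
Qed.

HB.instance Definition _ :=
  GRing.isSubmodClosed.Build A M (submod_pred hP) submod_pred_closed.

Definition subm := {x : M | x \in submod_pred hP}.
HB.instance Definition _ := [isSub for (@sval M (submod_pred hP) : subm -> M)].
HB.instance Definition _ := [Choice of subm by <:].
HB.instance Definition _ := [SubChoice_isSubLmodule of subm by <:].

Lemma subm_valP (x : subm) : P (val x). Proof. by apply/asboolP; case: x. Qed.

Definition in_subm x (Px : P x) : subm := Sub x (asboolT Px).

End Submodules.

Definition pack_linear (A : comPzRingType) (U V : lmodType A) (f : U -> V)
  (lf : linear f) : {linear U -> V} :=
  HB.pack f (GRing.isLinear.Build A U V *:%R f lf).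

Section LinearChoice.
Variables (A : comPzRingType) (U V : lmodType A) (R : U -> V -> Prop).

Lemma linear_choice :
  (forall u, exists v, R u v) -> (forall u v v', R u v -> R u v' -> v = v') ->
  (forall a u u' v v', R u v -> R u' v' -> R (a *: u + u') (a *: v + v')) ->
  exists f : {linear U -> V}, forall u, R u (f u).
Proof.
move=> /choice [f Rf] Rfun Rlin.
have lf : linear f by move=> a u u'; apply: Rfun (Rf _) (Rlin _ _ _ _ _ (Rf u) (Rf u')).
by exists (pack_linear lf).
Qed.

End LinearChoice.

Section Span.
Variables (A : comPzRingType) (M : lmodType A).

Fixpoint span (s : seq M) : M -> Prop :=
  if s is a :: s' then fun x => exists c y, span s' y /\ x = c *: a + y
  else fun x => x = 0.

Lemma span_submod s : is_submod (span s).
Proof.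
elim: s => [|a s [h0 hD hZ]] /=; first exact: zero_submod.
split.
- by exists 0, 0; rewrite scale0r addr0.
- move=> x y [c1 [y1 [h1 ->]]] [c2 [y2 [h2 ->]]].
  exists (c1 + c2), (y1 + y2); split; first exact: hD.
  by rewrite scalerDl addrACA.
- move=> b x [c [y [h ->]]]; exists (b * c), (b *: y); split; first exact: hZ.
  by rewrite scalerDr scalerA.
Qed.

Lemma span_head a s : span (a :: s) a.
Proof. by exists 1, 0; split; [apply: submod0 (span_submod s) | rewrite scale1r addr0]. Qed.

Lemma span_tail a s x : span s x -> span (a :: s) x.
Proof. by move=> h; exists 0, x; rewrite scale0r add0r. Qed.

Lemma span_cat s t x y : span s x -> span t y -> span (s ++ t) (x + y).
Proof.
elim: s x => [|a s IH] x /=; first by move=> -> h; rewrite add0r.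
move=> [c [x' [hx' ->]]] hy; exists c, (x' + y); split; first exact: IH.
by rewrite addrA.
Qed.

Lemma spanE s x :
  span s x <-> exists c : 'I_(size s) -> A, x = \sum_(i < size s) c i *: s`_i.
Proof.
elim: s x => [|a s IH] x /=.
  by split=> [->|[c ->]]; [exists (fun _ => 0); rewrite big_ord0 | rewrite big_ord0].
split=> [[c [y [/IH [c' ->] ->]]]|[c ->]].
  exists (fun i => if unlift ord0 i is Some j then c' j else c).
  by rewrite big_ord_recl unlift_none; congr (_ + _); apply: eq_bigr => i _; rewrite liftK.
rewrite big_ord_recl; exists (c ord0), (\sum_(i < size s) c (lift ord0 i) *: s`_i).
by split=> //; apply/IH; exists (fun i => c (lift ord0 i)).
Qed.

Lemma fin_genP : fin_gen M <-> exists s : seq M, forall x, span s x.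
Proof. by split=> -[s hs]; exists s => x; apply/spanE. Qed.

Lemma fin_gen_trivial : (forall x : M, x = 0) -> fin_gen M.
Proof. by move=> M0; apply/fin_genP; exists [::]. Qed.

End Span.

Section SpanLinear.
Variables (A : comPzRingType) (U V : lmodType A) (f : {linear U -> V}).

Lemma span_map s x : span s x -> span (map f s) (f x).
Proof.
elim: s x => [|a s IH] x /=; first by move->; rewrite linear0.
by move=> [c [y [h ->]]]; exists c, (f y); split; [exact: IH | rewrite linearP].
Qed.

Lemma span_mapP s y : span (map f s) y -> exists2 x, span s x & y = f x.
Proof.
elim: s y => [|a s IH] y /=; first by move->; exists 0; rewrite ?linear0.
move=> [c [z [/IH [x hx ->] ->]]]; exists (c *: a + x); first by exists c, x.
by rewrite linearP.
Qed.

End SpanLinear.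

Definition acc_on (T : Type) (C : (T -> Prop) -> Prop) :=
  forall X : nat -> T -> Prop, (forall n, C (X n)) -> (forall n x, X n x -> X n.+1 x) ->
    exists N, forall n x, (N <= n)%N -> X n x -> X N x.

Lemma chain_mono (T : Type) (X : nat -> T -> Prop) :
  (forall n x, X n x -> X n.+1 x) -> forall m n x, (m <= n)%N -> X m x -> X n x.
Proof.
move=> hX m n x; elim: n => [|n IH]; first by rewrite leqn0 => /eqP ->.
by rewrite leq_eqVlt => /orP [/eqP -> // | /IH hm /hm]; apply: hX.
Qed.

(* Dependent choice: a family without maximal element yields a strictly increasing chain. *)
Lemma acc_maximal (T : Type) (C F : (T -> Prop) -> Prop) :
  acc_on C -> (forall X, F X -> C X) -> (exists X, F X) ->
  exists X, F X /\ forall Y, F Y -> (forall x, X x -> Y x) -> forall x, Y x -> X x.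
Proof.
move=> hacc FC [X0 FX0]; apply: contrapT => nomax.
have step (Z : {X | F X}) : {Y : {X | F X} |
    (forall x, sval Z x -> sval Y x) /\ ~ (forall x, sval Y x -> sval Z x)}.
  apply: cid; apply: contrapT => h; apply: nomax; exists (sval Z); split; first exact: svalP.
  move=> Y FY ZY; apply: contrapT => nYZ; apply: h; by exists (exist _ Y FY).
pose chain n := iter n (fun Z => sval (step Z)) (exist _ X0 FX0).
have [N HN] : exists N, forall n x, (N <= n)%N -> sval (chain n) x -> sval (chain N) x.
  apply: hacc => [n|n x]; first exact/FC/svalP.
  by rewrite /chain iterS; case: (svalP (step (chain n))) => + _; apply.
case: (svalP (step (chain N))) => _; apply => x.
exact: HN N.+1 x (leqnSn N).
Qed.

Section NoetherianModule.
Variables (A : comPzRingType) (M : lmodType A).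
Hypothesis hA : noetherian_ring A.

(* Induction on the generators: the coefficients of the first generator form an
   increasing chain of ideals, the rest is handled in the span of the tail. *)
Lemma acc_submod_span (s : seq M) (X : nat -> M -> Prop) :
  (forall n, is_submod (X n)) -> (forall n x, X n x -> X n.+1 x) ->
  (forall n x, X n x -> span s x) ->
  exists N, forall n x, (N <= n)%N -> X n x -> X N x.
Proof.
elim: s X => [|a s IH] X hX hm hs.
  by exists 0%N => n x _ /hs /= ->; apply: submod0 (hX 0%N).
have hs' := span_submod s.
pose I n c := exists2 m, X n m & span s (m - c *: a).
have hI n : is_ideal (I n).
  split=> [|c1 c2 [m1 h1 s1] [m2 h2 s2]|r c [m h sm]].
  - by exists 0; [apply: submod0 (hX n) | rewrite scale0r subr0; apply: submod0].
  - exists (m1 + m2); first exact: submodD (hX n) _ _ h1 h2.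
    by rewrite scalerDl opprD addrACA; apply: submodD.
  - exists (r *: m); first exact: submodZ (hX n) _ _ h.
    by rewrite -scalerA -scalerBr; apply: submodZ.
have [N1 HN1] := hA hI (fun n c '(ex_intro2 m h sm) => ex_intro2 _ _ m (hm n m h) sm).
pose Y n x := X n x /\ span s x.
have [N2 HN2] : exists N, forall n x, (N <= n)%N -> Y n x -> Y N x.
  apply: IH => [n|n x [h1 h2]|n x []] //; last by split=> //; apply: hm.
  split=> [|x y [h1 h2] [h3 h4]|c x [h1 h2]].
  - by split; apply: submod0.
  - by split; apply: submodD.
  - by split; apply: submodZ.
pose N := maxn N1 N2; exists N => n x hn hx.
have [hn1 hn2] : (N1 <= n /\ N2 <= n)%N by split; apply: leq_trans hn; rewrite ?leq_maxl ?leq_maxr.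
have [c [y [hy ex]]] := hs n x hx.
have hIn : I n c by exists x => //; rewrite ex addrAC subrr add0r.
have [m' hm' sm'] : I N c.
  have [m'' h1 h2] := HN1 n c hn1 hIn.
  by exists m'' => //; apply: chain_mono hm _ _ _ _ h1; rewrite leq_maxl.
have hm'n : X n m' by apply: chain_mono hm _ _ _ _ hm'.
have [hY _] : Y N2 (x - m').
  apply: HN2 hn2 _; split; first exact: submodB (hX n) _ _ hx hm'n.
  have -> : x - m' = y - (m' - c *: a) by rewrite ex opprB addrCA addrA.
  exact: submodB.
have hYN : X N (x - m') by apply: chain_mono hm _ _ _ _ hY; rewrite leq_maxr.
by have := submodD (hX N) hYN hm'; rewrite subrK.
Qed.

Lemma acc_submod : fin_gen M -> acc_on (@is_submod A M).
Proof. by move=> /fin_genP [s hs] X hX hm; apply: acc_submod_span hX hm _ => n x _. Qed.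

End NoetherianModule.

Section FinGenClosure.
Variables (A : comPzRingType).

(* A maximal finitely generated submodule inside [f(N)] must be all of it. *)
Lemma fin_gen_sub (N M : lmodType A) (f : {linear N -> M}) :
  noetherian_ring A -> injective f -> fin_gen M -> fin_gen N.
Proof.
move=> hA inj fgM; pose F J := is_submod J /\ exists s : seq N, forall y, J y <-> span (map f s) y.
have [J [[hJ [s hs]] Jmax]] := acc_maximal (F := F) (acc_submod hA fgM) (fun X h => h.1)
  (ex_intro _ _ (conj (span_submod (map f [::])) (ex_intro _ [::] (fun y => iff_refl _)))).
apply/fin_genP; exists s => x.
have /span_mapP [x' hx' /inj -> //] : span (map f s) (f x).
apply/hs/(Jmax (span (map f (x :: s)))); last exact: span_head.
  by split; [exact: span_submod | exists (x :: s)].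
by move=> y /hs; apply: span_tail.
Qed.

Lemma fin_gen_ext (L M N : lmodType A) (f : {linear L -> M}) (g : {linear M -> N}) :
  (forall z, exists y, g y = z) -> (forall y, g y = 0 <-> exists x, f x = y) ->
  fin_gen L -> fin_gen N -> fin_gen M.
Proof.
move=> /choice [h gh] ex /fin_genP [sL hsL] /fin_genP [sN hsN].
apply/fin_genP; exists (map f sL ++ map h sN) => m.
have /span_mapP [m' hm' e] : span (map g (map h sN)) (g m).
  by rewrite -map_comp (eq_map gh) map_id.
have /ex [x hx] : g (m - m') = 0 by rewrite linearB e subrr.
by rewrite -(subrK m' m) -hx; apply: span_cat (span_map f (hsL x)) hm'.
Qed.

Lemma Ass_sub (N M : lmodType A) (f : {linear N -> M}) q :
  injective f -> Ass N q -> Ass M q.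
Proof.
move=> inj [hq [x hx]]; split=> //; exists (f x) => a.
by rewrite hx -linearZ -(linear0 f); split=> [-> | /inj].
Qed.

Lemma Ass_ext (L M N : lmodType A) (f : {linear L -> M}) (g : {linear M -> N}) q :
  injective f -> (forall y, g y = 0 <-> exists x, f x = y) ->
  Ass M q -> Ass L q \/ Ass N q.
Proof.
move=> inj ex [qp [m hm]]; have [qI _ qM] := qp.
have [[a [nqa agm]] | none] := lem (exists a, ~ q a /\ a *: g m = 0); last first.
  right; split=> //; exists (g m) => a; split=> [/hm am0 | agm].
    by rewrite -linearZ am0 linear0.
  by apply: contrapT => nqa; apply: none; exists a.
have [x hx] : exists x, f x = a *: m by apply/ex; rewrite linearZ.
left; split=> //; exists x => b.
have -> : b *: x = 0 <-> b *: (a *: m) = 0.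
  by rewrite -hx -linearZ -(linear0 f); split=> [-> | /inj].
by rewrite scalerA -hm; split=> [/(idealMr qI) // | /qM []].
Qed.

End FinGenClosure.

Lemma Ass_trivial (A : comPzRingType) (M : lmodType A) q :
  (forall x : M, x = 0) -> ~ Ass M q.
Proof. by move=> M0 [[_ q1 _] [x hx]]; apply/q1/hx. Qed.

Section CyclicModule.
Variables (A : comPzRingType) (p : A -> Prop).
Hypothesis hp : is_ideal p.

Definition ideal_pred of is_ideal p : {pred A} := fun a => `[< p a >].

Lemma ideal_predP a : reflect (p a) (a \in ideal_pred hp).
Proof. exact: asboolP. Qed.

Lemma ideal_pred_closed : zmod_closed (ideal_pred hp).
Proof.
split=> [|a b /ideal_predP pa /ideal_predP pb]; apply/ideal_predP.
  exact: ideal0.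
exact: idealB.
Qed.

HB.instance Definition _ :=
  GRing.isZmodClosed.Build A (ideal_pred hp) ideal_pred_closed.

Local Notation Q := {ideal_quot ideal_pred hp}.

Lemma pi_eq0 a : \pi_Q a = 0 <-> p a.
Proof.
suff h : reflect (p a) (\pi_Q a == 0) by split=> [/eqP/h | /h/eqP].
by rewrite piE Quotient.equivE subr0; apply: ideal_predP.
Qed.

Definition quo_scale (a : A) (x : Q) : Q := \pi_Q (a * repr x).

Lemma pi_scale a : {morph \pi_Q : b / a * b >-> quo_scale a b}.
Proof.
move=> b; apply/eqP; rewrite piE Quotient.equivE -mulrBr; apply/ideal_predP.
apply: idealMl hp _ _ _; apply/ideal_predP.
by have /eqP := reprK (\pi_Q b); rewrite piE Quotient.equivE -opprB rpredN.
Qed.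
Canonical pi_scale_morph a := PiMorph1 (pi_scale a).

Lemma quo_scaleA a b x : quo_scale a (quo_scale b x) = quo_scale (a * b) x.
Proof. by rewrite -[x]reprK !piE mulrA. Qed.

Lemma quo_scale1 : left_id 1 quo_scale.
Proof. by move=> x; rewrite -[x]reprK !piE mul1r. Qed.

Lemma quo_scaleDr : right_distributive quo_scale +%R.
Proof. by move=> a x y; rewrite -[x]reprK -[y]reprK !piE mulrDr. Qed.

Lemma quo_scaleDl x : {morph quo_scale^~ x : a b / a + b}.
Proof. by move=> a b; rewrite -[x]reprK !piE mulrDl. Qed.

HB.instance Definition _ :=
  GRing.Zmodule_isLmodule.Build A Q quo_scaleA quo_scale1 quo_scaleDr quo_scaleDl.

Lemma scale_pi a b : a *: \pi_Q b = \pi_Q (a * b).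
Proof. exact/esym/pi_scale. Qed.

Lemma quo_fin_gen : fin_gen Q.
Proof.
exists [:: \pi_Q 1] => x; exists (fun _ => repr x).
by rewrite big_ord1 scale_pi mulr1 reprK.
Qed.

Lemma Ass_quo q : prime_ideal p -> Ass Q q <-> q = p.
Proof.
move=> [_ p1 pM]; split=> [[[qI q1 _] [x hx]] | ->]; last first.
  by split=> //; exists (\pi_Q 1) => a; rewrite scale_pi mulr1 pi_eq0.
have npx : ~ p (repr x) by move=> px; apply/q1/hx; rewrite -[x]reprK scale_pi mul1r pi_eq0.
apply: funext => a; apply: propext; rewrite hx -[x]reprK scale_pi pi_eq0.
by split=> [/pM [] | /(idealMr hp)].
Qed.

End CyclicModule.

Section SubExtClosed.
Variables (A : comPzRingType) (D : subcat A).
Hypothesis hD : sub_ext_closed D.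

Lemma sub_ext_closed_fin_gen M : D M -> fin_gen M.
Proof. by case: hD => _ h _ _; apply: h. Qed.

Lemma sub_ext_closed_inj (N M : lmodType A) (f : N -> M) :
  linear f -> injective f -> D M -> D N.
Proof. by case: hD => _ _ h _ lf; apply: (h N M (pack_linear lf)). Qed.

Lemma sub_ext_closed_ext (L M N : lmodType A) (f : L -> M) (g : M -> N) :
  linear f -> linear g -> injective f -> (forall z, exists y, g y = z) ->
  (forall y, g y = 0 <-> exists x, f x = y) -> D L -> D N -> D M.
Proof. by case: hD => _ _ _ h lf lg; apply: (h L M N (pack_linear lf) (pack_linear lg)). Qed.

Lemma sub_ext_closed_zero (M : lmodType A) : D (subm (@zero_submod A M)).
Proof.
have [[N DN] _ _ _] := hD; apply: (@sub_ext_closed_inj _ N (fun=> 0)) DN.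
  by move=> a u v; rewrite scaler0 addr0.
by move=> u v _; apply: val_inj; rewrite (subm_valP u) (subm_valP v).
Qed.

(* An extension of [K] by a submodule of a module in [D] lies in [D]. *)
Lemma sub_ext_closed_kernel (M N : lmodType A) (K L : M -> Prop)
    (hK : is_submod K) (hL : is_submod L) (phi : {linear subm hL -> N}) :
  (forall m, K m -> L m) -> (forall y, phi y = 0 <-> K (val y)) ->
  D (subm hK) -> D N -> D (subm hL).
Proof.
move=> KL ker DK DN.
pose Im z := exists y, phi y = z.
have hIm : is_submod Im.
  split=> [|_ _ [u <-] [v <-]|a _ [u <-]]; first by exists 0; rewrite linear0.
    by exists (u + v); rewrite linearD.
  by exists (a *: u); rewrite linearZ.
pose incl (x : subm hK) := in_subm hL (KL _ (subm_valP x)).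
pose corestr (y : subm hL) := in_subm hIm (ex_intro _ y erefl).
apply: (@sub_ext_closed_ext _ _ _ incl corestr) => //.
- by move=> a u v; apply: val_inj.
- by move=> a u v; apply: val_inj; rewrite /= linearP.
- by move=> u v /(congr1 val) /= /val_inj.
- by move=> z; have [y hy] := subm_valP z; exists y; apply: val_inj.
- move=> y; split=> [/(congr1 val) /ker Ky | [x <-]].
    by exists (in_subm hK Ky); apply: val_inj.
  by apply: val_inj; apply/ker/(subm_valP x).
- exact: (@sub_ext_closed_inj _ _ val) val_inj DN.
Qed.

End SubExtClosed.

Section MaximalAnnihilator.
Variables (A : comPzRingType) (M : lmodType A) (K : M -> Prop).
Hypothesis hK : is_submod K.

(* [ann_mod m] and [Ass_mod] are the annihilator of [m + K] and [Ass (M/K)]. *)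
Definition ann_mod (m : M) (a : A) := K (a *: m).

Definition Ass_mod (q : A -> Prop) :=
  prime_ideal q /\ exists m, forall a, q a <-> ann_mod m a.

Definition max_ann (x : M) :=
  ~ K x /\ forall m, ~ K m -> (forall a, ann_mod x a -> ann_mod m a) ->
    forall a, ann_mod m a -> ann_mod x a.

Lemma exists_max_ann : noetherian_ring A -> ~ (forall m, K m) -> exists x, max_ann x.
Proof.
move=> hA /existsNP [m0 Km0].
have FI (J : A -> Prop) : (exists2 m, ~ K m & J = ann_mod m) -> is_ideal J.
  by case=> m _ ->; apply: ann_submod_ideal.
have [_ [[x Kx ->] xmax]] := acc_maximal hA FI (ex_intro _ _ (ex_intro2 _ _ m0 Km0 erefl)).
by exists x; split=> // m Km xm; apply: xmax => //=; exists m.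
Qed.

Variables (x : M) (hx : max_ann x).

Lemma max_ann_prime : prime_ideal (ann_mod x).
Proof.
have [Kx xmax] := hx; split; first exact: ann_submod_ideal.
  by rewrite /ann_mod scale1r.
move=> a b; rewrite /ann_mod -scalerA => Kabx.
have [Kbx | nKbx] := lem (K (b *: x)); [by right | left].
apply: xmax nKbx _ _ Kabx => c Kcx.
by rewrite /ann_mod scalerA mulrC -scalerA; apply: submodZ.
Qed.

Lemma max_ann_saturated m c :
  (forall a, ann_mod x a -> ann_mod m a) -> ~ ann_mod x c -> ann_mod m c -> K m.
Proof. by move=> xm nxc mc; apply: contrapT => Km; apply/nxc/(hx.2 m Km xm). Qed.

End MaximalAnnihilator.

Section Enlarge.
Variables (A : comPzRingType) (D : subcat A) (M : lmodType A) (K : M -> Prop).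
Hypotheses (hA : noetherian_ring A) (hD : sub_ext_closed D) (fgM : fin_gen M).
Hypotheses (hK : is_submod K) (DK : D (subm hK)) (AK : forall q, Ass_mod K q -> AssD D q).
Variables (x : M) (hx : max_ann K x) (N : lmodType A) (y : N).
Hypotheses (DN : D N) (hy : forall a, ann_mod K x a <-> a *: y = 0).

Local Notation p := (ann_mod K x).

Let p_prime : prime_ideal p := max_ann_prime hK hx.

Lemma not_p1 : ~ p 1. Proof. by case: p_prime. Qed.

Lemma not_pM a b : ~ p a -> ~ p b -> ~ p (a * b).
Proof. by case: p_prime => _ _ pM na nb /pM []. Qed.

(* [sat t / K] consists of the classes killed by [p] that [t] maps into [(K + A x)/K]. *)
Definition sat (t : A) (m : M) := (forall a, p a -> K (a *: m)) /\ exists c, K (t *: m - c *: x).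

Lemma sat_submod t : is_submod (sat t).
Proof.
split=> [|u v [pu [c1 h1]] [pv [c2 h2]] | b u [pu [c h]]].
- split=> [a _|]; first by rewrite scaler0; apply: submod0.
  by exists 0; rewrite scaler0 scale0r subr0; apply: submod0.
- split=> [a pa|]; first by rewrite scalerDr; apply: submodD hK _ _ (pu _ pa) (pv _ pa).
  by exists (c1 + c2); rewrite scalerDr scalerDl opprD addrACA; apply: submodD.
- split=> [a pa|]; first by rewrite scalerA mulrC -scalerA; apply: submodZ hK _ _ (pu _ pa).
  by exists (b * c); rewrite scalerA mulrC -!scalerA -scalerBr; apply: submodZ.
Qed.

Lemma satM t t' m : sat t m -> sat (t' * t) m.
Proof.
by case=> pm [c h]; split=> //; exists (t' * c); rewrite -!scalerA -scalerBr; apply: submodZ.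
Qed.

Lemma sub_sat t m : K m -> sat t m.
Proof.
move=> Km; split=> [a _|]; first exact: submodZ.
by exists 0; rewrite scale0r subr0; apply: submodZ.
Qed.

Lemma sat_x t : sat t x.
Proof. by split=> [a pa // |]; exists t; rewrite subrr; apply: submod0. Qed.

(* The sets [sat t], [t \notin p], form a directed family; ACC gives a largest one. *)
Lemma sat_stable :
  exists2 t0, ~ p t0 & forall t, ~ p t -> forall m, sat t m -> sat t0 m.
Proof.
have FS J : (exists2 t, ~ p t & J = sat t) -> is_submod J by case=> t _ ->; apply: sat_submod.
have [_ [[t0 nt0 ->] t0max]] :=
  acc_maximal (acc_submod hA fgM) FS (ex_intro _ _ (ex_intro2 _ _ 1 not_p1 erefl)).
exists t0 => // t nt m /(satM t0) stm; apply: t0max stm => /=.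
  by exists (t0 * t) => //; apply: not_pM.
by move=> u /(satM t); rewrite mulrC.
Qed.

Variables (t0 : A) (nt0 : ~ p t0) (t0max : forall t, ~ p t -> forall m, sat t m -> sat t0 m).

Lemma sat_saturated m t : (forall a, p a -> K (a *: m)) -> ~ p t -> sat t0 (t *: m) -> sat t0 m.
Proof.
move=> pm nt [_ [d hd]]; apply: (t0max (not_pM nt0 nt)); split=> //.
by exists d; rewrite -scalerA.
Qed.

Lemma sat_ker m : sat t0 m -> K (t0 *: m) -> K m.
Proof. by case=> pm _; exact: (max_ann_saturated hx (m := m) pm nt0). Qed.

Lemma sat_in_D : D (subm (sat_submod t0)).
Proof.
pose R (u : subm (sat_submod t0)) z := exists2 c, K (t0 *: val u - c *: x) & z = c *: y.
have [phi phiR] : exists phi : {linear subm (sat_submod t0) -> N}, forall u, R u (phi u).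
  apply: linear_choice => [u | u _ _ [c hc ->] [c' hc' ->] | a u u' _ _ [c hc ->] [c' hc' ->]].
  - by have [_ [c hc]] := subm_valP u; exists (c *: y), c.
  - apply/eqP; rewrite -subr_eq0 -scalerBl; apply/eqP/hy.
    by have := submodB hK hc' hc; rewrite opprB addrC subrKA -scalerBl.
  - exists (a * c + c'); last by rewrite scalerDl scalerA.
    rewrite /= scalerDr scalerA mulrC -scalerA scalerDl opprD addrACA -scalerA -scalerBr.
    exact: submodD (submodZ hK _ hc) hc'.
apply: (sub_ext_closed_kernel hD (phi := phi) (sub_sat t0)) DK DN => u.
have [c hc ->] := phiR u; rewrite -hy; split=> [Kcx | Ku].
  by apply: sat_ker (subm_valP u) _; have := submodD hK hc Kcx; rewrite subrK.
by have := submodB hK (submodZ hK t0 Ku) hc; rewrite opprB addrC subrK.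
Qed.

Lemma Ass_mod_sat q : Ass_mod (sat t0) q -> AssD D q.
Proof.
move=> [qp [m hm]]; have [qI q1 qM] := qp.
have [[a [pa nqa]] | p_sub_q] := lem (exists a, p a /\ ~ q a).
  apply: AK; split=> //; exists (a *: m) => b; rewrite hm /ann_mod.
  split=> [[pbm _] | Kbam]; first by rewrite scalerA mulrC -scalerA; apply: pbm.
  have /hm /qM [/hm // | /nqa []] : sat t0 ((b * a) *: m) by rewrite -scalerA; apply: sub_sat.
have pq b : p b -> q b by move=> pb; apply: contrapT => nqb; apply: p_sub_q; exists b.
have [[c [qc npc]] | q_sub_p] := lem (exists c, q c /\ ~ p c).
  exfalso; apply/q1/hm; rewrite /ann_mod scale1r.
  have [pcm _] : sat t0 (c *: m) by apply/hm.
  apply: (sat_saturated _ npc ((hm c).1 qc)) => b pb.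
  have [pbm _] : sat t0 (b *: m) by apply/hm/pq.
  apply: (max_ann_saturated hx (m := b *: m) pbm npc).
  by rewrite /ann_mod scalerA mulrC -scalerA; apply: pcm.
have -> : q = p.
  apply: funext => b; apply: propext; split=> [qb | /pq //].
  by apply: contrapT => npb; apply: q_sub_p; exists b.
by apply: AK; split=> //; exists x.
Qed.

End Enlarge.

Section AssClassifies.
Variables (A : comPzRingType) (D : subcat A).
Hypotheses (hA : noetherian_ring A) (hD : sub_ext_closed D).

Definition admissible (M : lmodType A) (K : M -> Prop) :=
  exists hK : is_submod K, D (subm hK) /\ forall q, Ass_mod K q -> AssD D q.

Lemma admissible_grow (M : lmodType A) (K : M -> Prop) :
  fin_gen M -> admissible K -> ~ (forall m, K m) ->
  exists2 L : M -> Prop, admissible L & (forall m, K m -> L m) /\ exists m, L m /\ ~ K m.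
Proof.
move=> fgM [hK [DK AK]] /(exists_max_ann hK hA) [x hx].
have [N [DN [_ [y hy]]]] : AssD D (ann_mod K x).
  by apply: AK; split; [exact: max_ann_prime hx | exists x].
have [t0 nt0 t0max] := sat_stable hA fgM hK hx.
exists (sat K x t0).
  exists (sat_submod hK x t0); split; first exact: (sat_in_D hD DK hx DN (y := y) hy nt0).
  exact: (Ass_mod_sat hK AK hx (t0 := t0) nt0 t0max).
split=> [m | ]; first exact: sub_sat.
by exists x; split; [apply: sat_x | case: hx].
Qed.

Theorem Ass_sub_mem (M : lmodType A) :
  fin_gen M -> (forall q, Ass M q -> AssD D q) -> D M.
Proof.
move=> fgM AM.
have adm0 : admissible (fun m : M => m = 0).
  exists (zero_submod M); split; first exact: sub_ext_closed_zero.
  by move=> q [qp [m hm]]; apply: AM; split=> //; exists m.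
have [K [admK Kmax]] := acc_maximal (acc_submod hA fgM) (fun K '(ex_intro hK _) => hK)
  (ex_intro _ _ adm0).
have [hK [DK _]] := admK.
have [Kall | Knot] := lem (forall m, K m).
  apply: (sub_ext_closed_inj hD (f := fun m => in_subm hK (Kall m))) DK.
    by move=> a u v; apply: val_inj.
  by move=> u v /(congr1 val).
have [L admL [KL [m [Lm nKm]]]] := admissible_grow fgM admK Knot.
by case: nKm; apply: Kmax Lm.
Qed.

End AssClassifies.

Section AssRealization.
Variables (A : comPzRingType) (Phi : (A -> Prop) -> Prop).
Hypothesis hA : noetherian_ring A.

Definition Ass_in (M : lmodType A) := fin_gen M /\ forall q, Ass M q -> Phi q.

Lemma Ass_in_sub_ext_closed : sub_ext_closed Ass_in.
Proof.
split.
- have zero (x : subm (@zero_submod A A^o)) : x = 0.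
    by apply: val_inj; apply: subm_valP x.
  exists (subm (@zero_submod A A^o)).
  by split=> [|q /(Ass_trivial zero) []]; apply: fin_gen_trivial zero.
- by move=> M [].
- move=> N M f inj [fgM AM]; split; first exact: fin_gen_sub hA inj fgM.
  by move=> q /(Ass_sub inj) /AM.
- move=> L M N f g inj sur ex [fgL AL] [fgN AN]; split; first exact: fin_gen_ext sur ex fgL fgN.
  by move=> q /(Ass_ext inj ex) [/AL | /AN].
Qed.

Lemma AssD_Ass_in : (forall p, Phi p -> prime_ideal p) -> forall p, AssD Ass_in p <-> Phi p.
Proof.
move=> hPhi p; split=> [[M [[_ AM] /AM //]] | Pp].
have pp := hPhi p Pp; have [hp _ _] := pp.
exists {ideal_quot ideal_pred hp}; split; last exact/Ass_quo.
by split=> [|q /Ass_quo -> //]; apply: quo_fin_gen.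
Qed.

End AssRealization.

Lemma AssD_sub_subcat (A : comPzRingType) (D1 D2 : subcat A) :
  noetherian_ring A -> sub_ext_closed D1 -> sub_ext_closed D2 ->
  (forall p, AssD D1 p -> AssD D2 p) -> forall M, D1 M -> D2 M.
Proof.
move=> hA hD1 hD2 sub12 M D1M.
apply: (Ass_sub_mem hA hD2 (sub_ext_closed_fin_gen hD1 D1M)) => q Aq.
by apply: sub12; exists M.
Qed.

Unset Implicit Arguments.
Theorem corollary2p5 (A : comPzRingType) (hA : noetherian_ring A) :
  (forall D1 D2 : subcat A, sub_ext_closed D1 -> sub_ext_closed D2 ->
     (forall p, AssD D1 p <-> AssD D2 p) ->
     forall M : lmodType A, D1 M <-> D2 M)
  /\
  (forall Phi : (A -> Prop) -> Prop, (forall p, Phi p -> prime_ideal p) ->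
     exists D : subcat A, sub_ext_closed D /\ (forall p, AssD D p <-> Phi p)).
Proof.
split=> [D1 D2 hD1 hD2 eqAss M | Phi hPhi].
  by split; apply: AssD_sub_subcat => // p /eqAss.
exists (Ass_in Phi); split; first exact: Ass_in_sub_ext_closed.
exact: AssD_Ass_in.
Qed.
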